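(* Let $\mathfrak{G}$ be a non-redundant assembly graph. Then for every circuit $C$ of $\mathfrak{G}$ and every vertex $v$ of $\mathfrak{G}$, the number of occurrences of $v$ in $C$ equals the number of occurrences of $Label(v)$ in the cyclic string $Label(C)$.
   Context: All strings are over a fixed finite alphabet $\Sigma$. A cyclic string is a bi-infinite periodic word $\mathbb{Z}\to\Sigma$, considered up to shifting indices; its period is its least period $d\ge 1$. For a nonempty finite string $x$, $\langle x\rangle$ denotes the cyclic string obtained by repeating $x$ infinitely in both directions. A finite string $t$ is a substring of a cyclic string $c$ of period $d$ if it appears as a contiguous block of $c$; its number of occurrences in $c$ is the number of starting positions modulo $d$ at which it appears. A string $u$ is a proper infix of $w$ if $w=aub$ with $a,b$ nonempty. An abstract assembly graph is a finite directed multigraph in which each vertex and edge carries a label (a finite or cyclic string) such that for every edge $e$ from $u$ to $v$, $Label(u)$ is a prefix and $Label(v)$ is a suffix of $Label(e)$. An edge $e$ from $u$ to $v$ is a prefix edge if $Label(e)=Label(v)$ and a suffix edge if $Label(e)=Label(u)$. An assembly graph is an abstract assembly graph in which every vertex and edge lies on a directed cycle and no edge is both a prefix and a suffix edge. The label of a walk $v_0,e_1,v_1,\dots,e_n,v_n$ is $Label(e_1)$ followed, for $i=2,\dots,n$, by $Label(e_i)$ with its first $|Label(v_{i-1})|$ characters removed (consecutive edge labels overlap in the intermediate vertex label); a walk with no edges has the label of its vertex. A circuit is a closed walk ($v_n=v_0$), considered up to rotation and required to be primitive (not a repetition of a shorter closed walk); writing the walk label as $Label(v_0)\,x$, the label of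 the circuit is the cyclic string $\langle x\rangle$. The number of occurrences of a vertex $v$ in a circuit is the number of indices $i\in\{1,\dots,n\}$ with $v_i=v$. A walk $P$ is an inner subwalk of a walk $Q$ if $Q=APB$ for walks $A,B$ each containing at least one edge. An assembly graph is non-redundant if whenever $P,Q$ are walks with $Label(P)$ a proper infix of $Label(Q)$, $P$ occurs as an inner subwalk of $Q$. *)

From mathcomp Require Import all_boot.
Set Implicit Arguments. Unset Strict Implicit. Unset Printing Implicit Defensive.

Record lgraph (Sigma : finType) := LGraph {
  vertex : finType;
  edge : finType;
  src : edge -> vertex;
  tgt : edge -> vertex;
  vlabel : vertex -> seq Sigma;
  elabel : edge -> seq Sigma
}.

Section Graphs.
Variables (Sigma : finType) (G : lgraph Sigma).

(* A walk v_0, e_1, v_1, ..., e_n, v_n is given by its start vertex v_0 and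
   its edge list [e_1; ...; e_n]; it is valid when src e_1 = v_0 and
   src e_{i+1} = tgt e_i. *)
Fixpoint is_walk (v : vertex G) (es : seq (edge G)) : bool :=
  match es with
  | [::] => true
  | e :: es' => (src e == v) && is_walk (tgt e) es'
  end.

Definition walk_end (v : vertex G) (es : seq (edge G)) : vertex G :=
  last v (map (@tgt _ G) es).

Definition closed_walk (v : vertex G) (es : seq (edge G)) : bool :=
  is_walk v es && (walk_end v es == v).

Definition abstract_assembly_graph : Prop :=
  forall e : edge G, prefix (vlabel (src e)) (elabel e)
                     /\ suffix (vlabel (tgt e)) (elabel e).

Definition prefix_edge (e : edge G) : bool := elabel e == vlabel (tgt e).
Definition suffix_edge (e : edge G) : bool := elabel e == vlabel (src e).

Definition directed_cycle (v : vertex G) (es : seq (edge G)) : bool :=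
  [&& closed_walk v es, 0 < size es & uniq (map (@tgt _ G) es)].

Definition assembly_graph : Prop :=
  [/\ abstract_assembly_graph,
      (forall v : vertex G, exists v0 es,
          directed_cycle v0 es /\ v \in map (@tgt _ G) es),
      (forall e : edge G, exists v0 es, directed_cycle v0 es /\ e \in es)
    & (forall e : edge G, ~~ (prefix_edge e && suffix_edge e))].

Definition walk_label (v : vertex G) (es : seq (edge G)) : seq Sigma :=
  match es with
  | [::] => vlabel v
  | e :: es' => elabel e ++
      flatten [seq drop (size (vlabel (src f))) (elabel f) | f <- es']
  end.

Definition proper_infix (u w : seq Sigma) : Prop :=
  exists a b : seq Sigma, [/\ a != [::], b != [::] & w = a ++ u ++ b].

Definition inner_subwalk (p0 : vertex G) (pes : seq (edge G))
    (q0 : vertex G) (qes : seq (edge G)) : Prop :=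
  exists A B : seq (edge G),
    [/\ A != [::], B != [::], walk_end q0 A = p0 & qes = A ++ pes ++ B].

Definition non_redundant : Prop :=
  forall p0 pes q0 qes, is_walk p0 pes -> is_walk q0 qes ->
    proper_infix (walk_label p0 pes) (walk_label q0 qes) ->
    inner_subwalk p0 pes q0 qes.

Definition primitive_walk (es : seq (edge G)) : Prop :=
  forall (w : seq (edge G)) (m : nat), 1 < m -> es <> flatten (nseq m w).

(* A circuit (represented by any of its rotations): a primitive closed walk
   with at least one edge. *)
Definition circuit (v : vertex G) (es : seq (edge G)) : Prop :=
  [/\ closed_walk v es, 0 < size es & primitive_walk es].

(* Writing the walk label as Label(v_0) x, the circuit label is <x>;
   we return the finite word x. *)
Definition circuit_word (v : vertex G) (es : seq (edge G)) : seq Sigma :=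
  drop (size (vlabel v)) (walk_label v es).

(* number of indices i in {1..n} with v_i = v *)
Definition vertex_occurrences (u : vertex G) (es : seq (edge G)) : nat :=
  count (fun e => tgt e == u) es.

End Graphs.

Section Cyclic.
Variable Sigma : finType.

(* The cyclic string <x> as the periodic word i |-> x_(i mod |x|)
   (positions are taken in nat; the word is periodic so this loses nothing). *)
Definition cyc (x : seq Sigma) (i : nat) : option Sigma := onth x (i %% size x).

(* d is a period of <x>: c(i + d) = c(i) for all i (it suffices to check
   one full block of |x| positions since c has period |x|). *)
Definition is_periodb (x : seq Sigma) (d : nat) : bool :=
  all (fun i => cyc x (i + d) == cyc x i) (iota 0 (size x)).

(* least period d >= 1 of <x> (|x| is always a period) *)
Definition cperiod (x : seq Sigma) : nat :=
  (find (fun d => is_periodb x d.+1) (iota 0 (size x))).+1.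

Definition occurs_at (t x : seq Sigma) (i : nat) : bool :=
  all (fun j => cyc x (i + j) == onth t j) (iota 0 (size t)).

(* number of occurrences of t in <x>: starting positions modulo the period *)
Definition cyc_occurrences (t x : seq Sigma) : nat :=
  count (occurs_at t x) (iota 0 (cperiod x)).

End Cyclic.

From mathcomp Require Import all_boot zify.
Set Implicit Arguments. Unset Strict Implicit. Unset Printing Implicit Defensive.

(* Along a walk Q, the label of the i-th vertex occupies a window [lpos i, rpos i) of
   the word spelled by Q, and since no edge is both a prefix and a suffix edge these
   windows strictly advance.  Non-redundancy gives the converse rigidity: an occurrence
   of the word of a walk P strictly inside the word of Q is the window of an occurrence
   of P as a subwalk of Q.
   Unroll the circuit C into Q = C^K for K large; the word of Q is then a factor of the
   cyclic word <x> = Label(C).  Send the k-th occurrence of v on C to the position of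
   its label in <x>, modulo the least period d of <x>.  This lands on an occurrence of
   Label(v) in <x>; it is onto, since an occurrence of Label(v) placed inside the word
   of Q is the window of some occurrence of v; and it is injective, since two
   occurrences of v at positions congruent modulo d would, by rigidity, make C equal
   to a proper rotation of itself, contradicting primitivity. *)

(** * Sequences and periodic functions *)

Section SeqFacts.
Variable T : Type.
Implicit Types s w : seq T.

Lemma onth_take s n i : onth (take n s) i = if i < n then onth s i else None.
Proof.
elim: s n i => [|x s IH] [|n] [|i] //=; try by case: ifP.
by rewrite IH.
Qed.

Lemma onth_drop s n i : onth (drop n s) i = onth s (n + i).
Proof. by elim: s n => [|x s IH] [|n] //=; rewrite onth0n. Qed.

Lemma onth_periodM s p : (forall i, i + p < size s -> onth s (i + p) = onth s i) ->
  forall m i, i + m * p < size s -> onth s (i + m * p) = onth s i.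
Proof.
move=> hp; elim=> [|m IH] i; first by rewrite addn0.
have -> : i + m.+1 * p = i + m * p + p by rewrite mulSn; lia.
by move=> hi; rewrite hp ?IH //; lia.
Qed.

Lemma drop_take_split w a r t b : a <= r -> r <= t -> t <= b -> b <= size w ->
  drop a (take b w) = drop a (take r w) ++ drop r (take t w) ++ drop t (take b w).
Proof.
move=> ar rt tb bw.
have E : take b w = take r w ++ drop r (take t w) ++ drop t (take b w).
  rewrite catA -{1}(cat_take_drop t (take b w)) take_takel //.
  by rewrite -{1}(cat_take_drop r (take t w)) take_takel.
rewrite {1}E drop_cat size_takel; last lia.
case: ltnP => // ra; have -> : a = r by lia.
by rewrite subnn drop0 [drop r (take r w)]drop_oversize // size_take_min geq_minl.
Qed.

Lemma take_cat3 w A P B k : take k w = A ++ P ++ B ->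
  take (size A) w = A /\ take (size P) (drop (size A) w) = P.
Proof.
move=> h; have hk : size A + size P <= k.
  by move: (congr1 size h); rewrite !size_cat size_take; case: ltnP; lia.
split; first by rewrite -(take_takel _ (_ : size A <= k)) ?h ?take_size_cat //; lia.
by rewrite take_drop addnC -(take_takel _ hk) h catA take_size_cat ?size_cat // drop_size_cat.
Qed.

Lemma size_flatten_nseq s K : size (flatten (nseq K s)) = K * size s.
Proof. by elim: K => [|K IH] //=; rewrite size_cat IH mulSn. Qed.

Lemma flatten_nseqD s m n :
  flatten (nseq (m + n) s) = flatten (nseq m s) ++ flatten (nseq n s).
Proof. by rewrite nseqD flatten_cat. Qed.

Lemma onth_flatten_nseq s K i : i < K * size s ->
  onth (flatten (nseq K s)) i = onth s (i %% size s).
Proof.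
elim: K i => [|K IH] i hi; first by rewrite mul0n in hi.
rewrite /= onth_cat; case: ltnP => h; first by rewrite modn_small.
rewrite IH; last by rewrite mulSn in hi; lia.
by rewrite -{2}(subnK h) modnDr.
Qed.

Lemma take_flatten_nseq s K q i : i + q * size s <= K * size s ->
  take (i + q * size s) (flatten (nseq K s))
  = flatten (nseq q s) ++ take i (flatten (nseq K s)).
Proof.
move=> hi; case: (posnP (size s)) => [/size0nil -> | s_gt0].
  have E n : flatten (nseq n ([::] : seq T)) = [::] by elim: n.
  by rewrite !E.
have qK : q <= K by rewrite -(leq_pmul2r s_gt0); lia.
have hKq : i <= (K - q) * size s by rewrite mulnBl; lia.
have E1 : flatten (nseq K s) = flatten (nseq q s) ++ flatten (nseq (K - q) s).
  by rewrite -flatten_nseqD subnKC.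
have E2 : flatten (nseq K s) = flatten (nseq (K - q) s) ++ flatten (nseq q s).
  by rewrite -flatten_nseqD subnK.
rewrite {1}E1 E2 take_cat size_flatten_nseq ltnNge leq_addl /= addnK.
by rewrite takel_cat ?size_flatten_nseq.
Qed.

Lemma periodic_seq_power s g m : size s = m * g ->
  (forall i, i + g < size s -> onth s (i + g) = onth s i) ->
  s = flatten (nseq m (take g s)).
Proof.
elim: m s => [|m IH] s hs hp; first by apply: size0nil.
rewrite /= -{1}(cat_take_drop g s); congr (_ ++ _).
have hd : size (drop g s) = m * g by rewrite size_drop hs mulSn; lia.
rewrite (IH (drop g s) hd) => [|i]; last first.
  by rewrite size_drop => hi; rewrite !onth_drop addnA hp //; lia.
case: m {IH} hd hs => [|m] // hd hs.
congr (flatten (nseq _ _)); apply: eq_from_onth => i.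
rewrite !onth_take; case: ltnP => // hi.
by rewrite onth_drop addnC hp //; rewrite hs; lia.
Qed.

Lemma count_nth_iota (x0 : T) (p : pred T) s :
  count p s = count (fun k => p (nth x0 s k)) (iota 0 (size s)).
Proof. by rewrite -{1}(mkseq_nth x0 s) /mkseq count_map. Qed.

End SeqFacts.

Definition periodic (T : Type) (f : nat -> T) (p : nat) := forall i, f (i + p) = f i.

Section Periodic.
Variables (T : Type) (f : nat -> T).

Lemma periodicM p k : periodic f p -> periodic f (k * p).
Proof. by move=> hp; elim: k => [|k IH] i; rewrite ?addn0 // mulSn addnA IH hp. Qed.

Lemma periodic_gcd a b : 0 < a -> periodic f a -> periodic f b -> periodic f (gcdn a b).
Proof.
move=> a_gt0 hpa hpb i; have [u _ /dvdnP [c hc]] := Bezoutl b a_gt0.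
by rewrite -(periodicM u hpb) -addnA hc (periodicM c hpa).
Qed.

Lemma periodic_window n a d : 0 < n -> periodic f n ->
  (forall j, j < n -> f (a + j + d) = f (a + j)) -> periodic f d.
Proof.
move=> n_gt0 hn hw.
have hw' j : f (a + j + d) = f (a + j).
  have -> : a + j + d = a + j %% n + d + j %/ n * n by rewrite {1}(divn_eq j n); lia.
  have -> : a + j = a + j %% n + j %/ n * n by rewrite {1}(divn_eq j n); lia.
  by rewrite !(periodicM _ hn) hw // ltn_mod.
move=> i; rewrite -(periodicM a hn i) -(periodicM a hn (i + d)).
have -> : i + a * n = a + (i + a * n - a) by nia.
by rewrite -hw'; congr f; nia.
Qed.

End Periodic.

Lemma cyclic_period_power (T : Type) (s : seq T) d : 0 < d < size s ->
  periodic (fun i => onth s (i %% size s)) d ->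
  exists w m, 1 < m /\ s = flatten (nseq m w).
Proof.
move=> /andP [d_gt0 d_lt] hd; set n := size s in d_lt hd.
have hn : periodic (fun i => onth s (i %% n)) n by move=> i; rewrite modnDr.
have hg := periodic_gcd d_gt0 hd hn; set g := gcdn d n in hg.
have g_gt0 : 0 < g by rewrite gcdn_gt0 d_gt0.
have g_dvd : g %| n by apply: dvdn_gcdr.
have g_lt : g < n by apply: leq_ltn_trans d_lt; apply: dvdn_leq d_gt0 (dvdn_gcdl _ _).
exists (take g s), (n %/ g); split.
  by move: (divnK g_dvd); case: (n %/ g) => [|[|m]] //=; lia.
apply: periodic_seq_power => [|i hi]; first by rewrite divnK.
by have := hg i; rewrite !modn_small //; lia.
Qed.

Lemma power_window_periodic (T : Type) (s : seq T) K a dl :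
  0 < size s -> a + dl + size s <= K * size s ->
  take (size s) (drop a (flatten (nseq K s)))
  = take (size s) (drop (a + dl) (flatten (nseq K s))) ->
  periodic (fun i => onth s (i %% size s)) dl.
Proof.
move=> s_gt0 hK hw; apply: (periodic_window (a := a) s_gt0) => [i | j hj]; first by rewrite modnDr.
have := congr1 (fun w => onth w j) hw; rewrite /= !onth_take hj !onth_drop.
by rewrite !onth_flatten_nseq; [move=> ->; congr onth; congr modn; lia | lia | lia].
Qed.

Lemma count_iota_bij (A B : pred nat) n d (phi : nat -> nat) :
  (forall k k', k < n -> k' < n -> A k -> A k' -> phi k = phi k' -> k = k') ->
  (forall k, k < n -> A k -> phi k < d /\ B (phi k)) ->
  (forall s, s < d -> B s -> exists k, [/\ k < n, A k & phi k = s]) ->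
  count A (iota 0 n) = count B (iota 0 d).
Proof.
move=> hinj hfw hbw.
rewrite -!size_filter -(size_map phi); apply/perm_size/uniq_perm.
- rewrite map_inj_in_uniq ?filter_uniq ?iota_uniq // => k k'.
  rewrite !mem_filter !mem_iota => /andP [hA hk] /andP [hA' hk'].
  exact: hinj.
- by rewrite filter_uniq ?iota_uniq.
move=> s; rewrite mem_filter mem_iota; apply/mapP/idP.
  move=> [k]; rewrite mem_filter mem_iota => /andP [hA hk] ->.
  by have [-> ->] := hfw k hk hA.
move=> /andP [hB hs]; have [k [hk hA <-]] := hbw s hs hB.
by exists k => //; rewrite mem_filter mem_iota hA.
Qed.

(** * Cyclic words *)

Section CyclicWords.
Variable Sigma : finType.
Implicit Types x t : seq Sigma.

Lemma cyc_periodic x : periodic (cyc x) (size x).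
Proof. by move=> i; rewrite /cyc modnDr. Qed.

Lemma is_periodbP x d : reflect (periodic (cyc x) d) (is_periodb x d).
Proof.
apply: (iffP allP) => [hb i | hd i _]; last by rewrite hd.
have [/eqP/nilP -> | x_gt0] := posnP (size x); first by rewrite /cyc !onth0n.
have mod_cyc j : cyc x (j %% size x) = cyc x j by rewrite /cyc modn_mod.
rewrite -mod_cyc -modnDml mod_cyc.
by rewrite (eqP (hb _ _)) ?mod_cyc // mem_iota ltn_mod x_gt0.
Qed.

Lemma cperiodP x : 0 < size x ->
  periodic (cyc x) (cperiod x) /\ cperiod x %| size x.
Proof.
move=> x_gt0; set p := fun d => is_periodb x d.+1.
have hp : has p (iota 0 (size x)).
  apply/hasP; exists (size x).-1; first by rewrite mem_iota; lia.
  by rewrite /p prednK //; apply/is_periodbP/cyc_periodic.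
have hf : find p (iota 0 (size x)) < size x.
  by rewrite -{2}(size_iota 0 (size x)) -has_find.
have /is_periodbP hd : is_periodb x (cperiod x).
  by have := nth_find 0 hp; rewrite nth_iota.
split=> //; have hg := periodic_gcd (isT : 0 < cperiod x) hd (@cyc_periodic x).
set g := gcdn (cperiod x) (size x) in hg *.
have g_gt0 : 0 < g by rewrite gcdn_gt0 x_gt0 orbT.
have [g_lt | g_gt | <-] := ltngtP g (cperiod x); last exact: dvdn_gcdr.
- have : g.-1 < find p (iota 0 (size x)) by move: g_lt; rewrite /cperiod -/p; lia.
  move/(before_find 0); rewrite nth_iota; last by move: g_lt; rewrite /cperiod -/p; lia.
  by rewrite /p add0n prednK //; move/is_periodbP: hg => ->.
- by move: (dvdn_leq (isT : 0 < cperiod x) (dvdn_gcdl (cperiod x) (size x))); lia.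
Qed.

Lemma modn_cperiodDM x a q : 0 < size x ->
  (a + q * size x) %% cperiod x = a %% cperiod x.
Proof. by move/cperiodP => [_ /dvdnP [m ->]]; rewrite mulnA addnC modnMDl. Qed.

Lemma occurs_at_periodic t x d s k : periodic (cyc x) d ->
  occurs_at t x (s + k * d) = occurs_at t x s.
Proof. by move=> hd; apply: eq_all => j /=; rewrite addnAC periodicM. Qed.

End CyclicWords.

(** * Words spelled by walks *)

Lemma proper_infix_window (Sigma : finType) (w u : seq Sigma) a r b :
  a < r -> r + size u < b -> b <= size w -> take (size u) (drop r w) = u ->
  proper_infix u (drop a (take b w)).
Proof.
move=> ar rb bw hu; have rw : r <= size w by lia.
exists (drop a (take r w)), (drop (r + size u) (take b w)); split.
- by rewrite -size_eq0 size_drop (size_takel rw); lia.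
- by rewrite -size_eq0 size_drop (size_takel bw); lia.
move: hu; rewrite take_drop addnC => hu.
by rewrite (@drop_take_split _ w a r (r + size u) b) ?hu //; lia.
Qed.

Section AssemblyWalks.
Variables (Sigma : finType) (G : lgraph Sigma).
Hypothesis G_abstract : abstract_assembly_graph G.
Hypothesis G_no_prefix_suffix : forall e : edge G, ~~ (prefix_edge e && suffix_edge e).
Implicit Types (v : vertex G) (e : edge G) (es : seq (edge G)).

Definition overhang e := drop (size (vlabel (src e))) (elabel e).

Definition overhangs es := flatten (map overhang es).

Definition walk_word v es := vlabel v ++ overhangs es.

Lemma overhangs_cat es1 es2 : overhangs (es1 ++ es2) = overhangs es1 ++ overhangs es2.
Proof. by rewrite /overhangs map_cat flatten_cat. Qed.

Lemma elabelE e : elabel e = vlabel (src e) ++ overhang e.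
Proof. by rewrite /overhang; have [/prefixP [s ->] _] := G_abstract e; rewrite drop_size_cat. Qed.

Lemma elabel_suffix e : exists y, elabel e = y ++ vlabel (tgt e).
Proof. by have [_ /suffixP [s ->]] := G_abstract e; exists s. Qed.

Lemma walk_labelE v es : is_walk v es -> walk_label v es = walk_word v es.
Proof.
case: es => [|e es] /=; first by rewrite /walk_word cats0.
by case/andP => /eqP <- _; rewrite /walk_word elabelE catA.
Qed.

Lemma is_walk_cat v es1 es2 :
  is_walk v (es1 ++ es2) = is_walk v es1 && is_walk (walk_end v es1) es2.
Proof. by elim: es1 v => [|e es1 IH] v //=; rewrite IH andbA. Qed.

Lemma circuit_wordE v es : is_walk v es -> circuit_word v es = overhangs es.
Proof. by move=> hw; rewrite /circuit_word walk_labelE // drop_size_cat. Qed.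

Lemma walk_end_cat v es1 es2 :
  walk_end v (es1 ++ es2) = walk_end (walk_end v es1) es2.
Proof. by rewrite /walk_end map_cat last_cat. Qed.

Lemma walk_word_cat v es1 es2 :
  walk_word v (es1 ++ es2) = walk_word v es1 ++ overhangs es2.
Proof. by rewrite /walk_word overhangs_cat catA. Qed.

Lemma walk_word_suffix v es : is_walk v es ->
  exists y, walk_word v es = y ++ vlabel (walk_end v es).
Proof.
elim/last_ind: es => [|es e IH]; first by exists [::]; rewrite /walk_word cats0.
rewrite -cats1 is_walk_cat => /andP [/IH [y Hy]] /= /andP [/eqP Hs _].
have [y' Hy'] := elabel_suffix e.
exists (y ++ y'); rewrite walk_word_cat Hy /overhangs /= cats0 -Hs walk_end_cat /=.
by rewrite -catA -elabelE Hy' catA.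
Qed.

Lemma non_redundant_vertex p0 P v : non_redundant G -> is_walk p0 P ->
  ~ proper_infix (walk_word p0 P) (vlabel v).
Proof.
move=> nr hP; rewrite -(walk_labelE hP) -[vlabel v]/(walk_label v [::]) => hinf.
by have [[|? ?] [B [/eqP]]] := nr _ _ _ _ hP (isT : is_walk v [::]) hinf.
Qed.

Lemma overhang_nil_tgt_shorter e : overhang e = [::] ->
  size (vlabel (tgt e)) < size (vlabel (src e)).
Proof.
move=> h0; have he : elabel e = vlabel (src e) by rewrite elabelE h0 cats0.
have [y hy] := elabel_suffix e.
rewrite ltnNge; apply: contra (G_no_prefix_suffix e) => hle.
have y0 : y = [::] by apply/size0nil; move: (congr1 size hy); rewrite he size_cat; lia.
have ht : vlabel (tgt e) = vlabel (src e) by rewrite -he hy y0.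
by rewrite /prefix_edge /suffix_edge he ht eqxx.
Qed.

Section Positions.
Variables (q0 : vertex G) (Q : seq (edge G)).
Hypothesis Q_walk : is_walk q0 Q.

Local Notation W := (walk_word q0 Q).

(* The label of the i-th vertex [vtx i] of Q occupies the window [lpos i, rpos i) of W. *)
Definition vtx i := walk_end q0 (take i Q).
Definition rpos i := size (walk_word q0 (take i Q)).
Definition lpos i := rpos i - size (vlabel (vtx i)).

Lemma walk_take_drop i : is_walk q0 (take i Q) /\ is_walk (vtx i) (drop i Q).
Proof. by move: Q_walk; rewrite -{1}(cat_take_drop i Q) is_walk_cat => /andP. Qed.

Lemma subwalk_walk i m : is_walk (vtx i) (take m (drop i Q)).
Proof.
have := (walk_take_drop i).2.
by rewrite -{1}(cat_take_drop m (drop i Q)) is_walk_cat => /andP [].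
Qed.

Lemma vtxD i m : vtx (i + m) = walk_end (vtx i) (take m (drop i Q)).
Proof. by rewrite /vtx takeD walk_end_cat. Qed.

Lemma walk_word_take i : walk_word q0 (take i Q) = take (rpos i) W.
Proof. by rewrite -{2}(cat_take_drop i Q) walk_word_cat take_size_cat. Qed.

Lemma rpos_le i : rpos i <= size W.
Proof. by rewrite /rpos -{2}(cat_take_drop i Q) walk_word_cat size_cat leq_addr. Qed.

Lemma lpos0 : lpos 0 = 0.
Proof. by rewrite /lpos /rpos /vtx take0 /walk_word cats0 subnn. Qed.

Lemma subwalk_word i m :
  walk_word (vtx i) (take m (drop i Q)) = drop (lpos i) (take (rpos (i + m)) W).
Proof.
rewrite -walk_word_take takeD walk_word_cat.
have [y Hy] := walk_word_suffix (walk_take_drop i).1.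
have <- : size y = lpos i by rewrite /lpos /rpos Hy size_cat addnK.
by rewrite Hy -catA drop_size_cat.
Qed.

Lemma rposE i : rpos i = lpos i + size (vlabel (vtx i)).
Proof.
have [y Hy] := walk_word_suffix (walk_take_drop i).1.
by rewrite /lpos /rpos Hy size_cat addnK.
Qed.

Lemma rposD i m : rpos (i + m) = rpos i + size (overhangs (take m (drop i Q))).
Proof. by rewrite /rpos takeD walk_word_cat size_cat. Qed.

Lemma size_subwalk_word i m :
  size (walk_word (vtx i) (take m (drop i Q))) = rpos (i + m) - lpos i.
Proof. by rewrite /walk_word size_cat rposD rposE; lia. Qed.

Lemma rpos_mono i m : rpos i <= rpos (i + m).
Proof. by rewrite rposD leq_addr. Qed.

Lemma lpos_mono i m : lpos i <= lpos (i + m).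
Proof.
have [y Hy] := walk_word_suffix (subwalk_walk i m).
move: (congr1 size Hy); rewrite size_subwalk_word size_cat -vtxD.
by have := rposE (i + m); have := rposE i; have := rpos_mono i m; lia.
Qed.

Lemma vertex_label_window i : drop (lpos i) (take (rpos i) W) = vlabel (vtx i).
Proof. by rewrite -[i in rpos i]addn0 -subwalk_word take0 /walk_word cats0. Qed.

Lemma pos_step i : i < size Q -> lpos i < lpos i.+1 \/ rpos i < rpos i.+1.
Proof.
move=> hi; have [e [es hd]] : exists e es, drop i Q = e :: es.
  case hd: (drop i Q) => [|e es]; last by exists e, es.
  by move: (congr1 size hd); rewrite size_drop /=; lia.
have hs : src e = vtx i by have := (walk_take_drop i).2; rewrite hd => /andP [/eqP].
have hv : vtx i.+1 = tgt e by rewrite -addn1 vtxD hd /= take0.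
have hr : rpos i.+1 = rpos i + size (overhang e).
  by rewrite -addn1 rposD hd /overhangs /= take0 /= cats0.
have := rposE i; have := rposE i.+1; rewrite /lpos hv hr.
have [/size0nil h0 | h_gt0] := posnP (size (overhang e)); last by right; lia.
by have := overhang_nil_tgt_shorter h0; rewrite hs; left; lia.
Qed.

Lemma pos_lt i j : i < j -> j <= size Q -> lpos i < lpos j \/ rpos i < rpos j.
Proof.
move=> lt_ij jQ; have := pos_step (leq_trans lt_ij jQ).
have := lpos_mono i.+1 (j - i.+1); have := rpos_mono i.+1 (j - i.+1).
by rewrite subnKC //; lia.
Qed.

Lemma pos_inj i j : i <= size Q -> j <= size Q ->
  lpos i = lpos j -> rpos i = rpos j -> i = j.
Proof.
move=> iQ jQ hl hr; case: (ltngtP i j) => // [/pos_lt | /pos_lt]; first by move/(_ jQ); lia.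
by move/(_ iQ); lia.
Qed.

Lemma inner_subwalk_index i m A P B : take m (drop i Q) = A ++ P ++ B ->
  vtx (i + size A) = walk_end (vtx i) A /\ take (size P) (drop (i + size A) Q) = P.
Proof. by move=> /take_cat3 [hA hP]; rewrite vtxD hA addnC -drop_drop. Qed.

Lemma subwalk_of_occurrence p0 P r : non_redundant G -> is_walk p0 P ->
  0 < r -> r + size (walk_word p0 P) < size W ->
  take (size (walk_word p0 P)) (drop r W) = walk_word p0 P ->
  exists c, [/\ c + size P <= size Q, take (size P) (drop c Q) = P,
                vtx c = p0 & lpos c = r].
Proof.
move=> nr hP r_gt0 hW hocc; set u := walk_word p0 P in hW hocc.
have exi : exists k, (k <= size Q) && (lpos k < r) by exists 0; rewrite lpos0.
have ubi k : (k <= size Q) && (lpos k < r) -> k <= size Q by case/andP.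
have [i /andP [iQ ir] imax] := ex_maxnP exi ubi.
have rpos_size : rpos (size Q) = size W by rewrite /rpos take_size.
have exj : exists k, r + size u < rpos k by exists (size Q); rewrite rpos_size.
have [j jt jmin] := ex_minnP exj.
have jQ : j <= size Q by apply: jmin; rewrite rpos_size.
have u_in a b : a < r -> r + size u < rpos b -> proper_infix u (drop a (take (rpos b) W)).
  by move=> ar rb; apply: proper_infix_window ar rb (rpos_le b) hocc.
have [lt_ij | le_ji] := ltnP i j; last first.
  have := rpos_mono j (i - j); rewrite subnKC // => ji.
  case: (non_redundant_vertex nr hP (v := vtx i)).
  by rewrite -vertex_label_window; apply: u_in ir _; lia.
have := u_in _ _ ir jt; rewrite -(subnKC (ltnW lt_ij)) -subwalk_word.
rewrite /u -(walk_labelE hP) -(walk_labelE (subwalk_walk _ _)).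
move=> /(nr _ _ _ _ hP (subwalk_walk _ _)) [A [B [A0 B0 hend hR]]].
have [hvc hPc] := inner_subwalk_index hR; rewrite hend in hvc.
have hsz : size A + size P + size B = j - i.
  by move: (congr1 size hR); rewrite !size_cat size_takel ?size_drop; lia.
have A_gt0 : 0 < size A by rewrite lt0n size_eq0.
have B_gt0 : 0 < size B by rewrite lt0n size_eq0.
exists (i + size A); split => //; first lia.
set c := i + size A; have rc : r <= lpos c.
  by rewrite leqNgt; apply/negP => cr; have := imax c; rewrite cr andbT; lia.
have ct : rpos (c + size P) <= r + size u.
  by rewrite leqNgt; apply/negP => /jmin; lia.
have := size_subwalk_word c (size P); rewrite hPc hvc -/u.
by have := rposE c; have := rpos_mono c (size P); lia.
Qed.

End Positions.

Section CircuitPower.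
Variables (v0 : vertex G) (es : seq (edge G)).
Hypothesis es_closed : closed_walk v0 es.

Local Notation x := (overhangs es).
Local Notation l := (size (vlabel v0)).
Local Notation power K := (flatten (nseq K es)).

Lemma power_walk K : is_walk v0 (power K).
Proof.
case/andP: es_closed => hw /eqP he.
by elim: K => [|K IH] //=; rewrite is_walk_cat hw he IH.
Qed.

Lemma walk_end_power K : walk_end v0 (power K) = v0.
Proof.
case/andP: es_closed => _ /eqP he.
by elim: K => [|K IH] //=; rewrite walk_end_cat he IH.
Qed.

Lemma overhangs_power K : overhangs (power K) = flatten (nseq K x).
Proof. by elim: K => [|K IH] //=; rewrite overhangs_cat IH. Qed.

Lemma pos_power_shift K q i : i + q * size es <= K * size es ->
  [/\ vtx v0 (power K) (i + q * size es) = vtx v0 (power K) i,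
      rpos v0 (power K) (i + q * size es) = rpos v0 (power K) i + q * size x
    & lpos v0 (power K) (i + q * size es) = lpos v0 (power K) i + q * size x].
Proof.
move=> hi; have ht := take_flatten_nseq hi.
have hv : vtx v0 (power K) (i + q * size es) = vtx v0 (power K) i.
  by rewrite /vtx ht walk_end_cat walk_end_power.
have hr : rpos v0 (power K) (i + q * size es) = rpos v0 (power K) i + q * size x.
  rewrite /rpos ht walk_word_cat /walk_word overhangs_power !size_cat size_flatten_nseq.
  by rewrite addnAC.
split=> //; have := rposE (power_walk K) i; have := rposE (power_walk K) (i + q * size es).
by rewrite hv hr; lia.
Qed.

Lemma overhangs_nonempty : 0 < size es -> 0 < size x.
Proof.
move=> es_gt0; case/andP: es_closed => hw /eqP he.
have hr0 : rpos v0 es 0 = l by rewrite /rpos take0 /walk_word cats0.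
have hrn : rpos v0 es (size es) = l + size x by rewrite /rpos take_size /walk_word size_cat.
have hvn : vtx v0 es (size es) = v0 by rewrite /vtx take_size.
rewrite lt0n; apply/negP => /eqP x0; suff : 0 = size es by lia.
apply: (pos_inj hw) => //; last by rewrite hr0 hrn x0 addn0.
by rewrite lpos0 /lpos hrn hvn x0 addn0 subnn.
Qed.

(* The word of [power K] is [Label(v0)] followed by [x^K], and [Label(v0)] is a suffix
   of [Label(v0) ++ x]; so the whole word is a factor of <x>, its letter [r] sitting
   at position [r - l] (shifted by [l * |x|] to avoid truncated subtraction). *)
Lemma walk_word_power_cyc K r : 0 < size es -> l < K ->
  r < size (walk_word v0 (power K)) ->
  onth (walk_word v0 (power K)) r = cyc x (r + (l * size x - l)).
Proof.
move=> es_gt0 lK; have x_gt0 := overhangs_nonempty es_gt0.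
have lx : l <= l * size x by rewrite leq_pmulr.
have lKx : l * size x < K * size x by rewrite ltn_pmul2r.
have hW : walk_word v0 (power K) = vlabel v0 ++ flatten (nseq K x).
  by rewrite /walk_word overhangs_power.
set w := walk_word v0 (power K) in hW *.
have size_w : size w = l + K * size x by rewrite hW size_cat size_flatten_nseq.
have tail j : l <= j -> j < size w -> onth w j = cyc x (j - l).
  by move=> lj jw; rewrite hW onth_cat ltnNge lj /= onth_flatten_nseq //; lia.
have [y hy] : exists y, vlabel v0 ++ x = y ++ vlabel v0.
  by case/andP: es_closed => hw /eqP he; have := walk_word_suffix hw; rewrite he.
have size_y : size y = size x by move: (congr1 size hy); rewrite !size_cat; lia.
have head j : j < l + size x -> onth w j = onth (vlabel v0 ++ x) j.
  move=> jl; rewrite hW; have -> : K = K.-1.+1 by lia.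
  by rewrite /= catA onth_cat size_cat jl.
have per j : j + size x < size w -> onth w (j + size x) = onth w j.
  move=> jw; have [lj | jl] := leqP l j.
    rewrite !tail ?(leq_trans lj (leq_addr _ _)) //; last lia.
    by rewrite addnC -addnBA // addnC cyc_periodic.
  rewrite !head; try lia.
  by rewrite {1}hy !onth_cat size_y ltnNge leq_addl addnK jl.
have [lr | rl] := leqP l r => rw.
  rewrite tail //; have -> : r + (l * size x - l) = r - l + l * size x by lia.
  by rewrite (periodicM _ (@cyc_periodic _ x)).
rewrite -(onth_periodM per (m := l) (i := r)); last lia.
by rewrite tail; [congr cyc; lia | lia | lia].
Qed.

Lemma vertex_occurrencesE K u : 0 < K ->
  vertex_occurrences u es = count (fun k => vtx v0 (power K) k.+1 == u) (iota 0 (size es)).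
Proof.
move=> K_gt0; rewrite /vertex_occurrences -(count_map (@tgt _ G) (pred1 u)) (count_nth_iota v0).
rewrite size_map; apply: eq_in_count => k; rewrite mem_iota => /andP [_ hk] /=.
have -> : power K = es ++ power K.-1 by case: K K_gt0.
rewrite /vtx takel_cat // /walk_end (last_nth v0) size_map size_takel //=.
by rewrite map_take nth_take.
Qed.

End CircuitPower.
End AssemblyWalks.

(** * Occurrences of a vertex along a circuit *)

Section CircuitOccurrences.
Variables (Sigma : finType) (G : lgraph Sigma).
Hypothesis G_abstract : abstract_assembly_graph G.
Hypothesis G_no_prefix_suffix : forall e : edge G, ~~ (prefix_edge e && suffix_edge e).
Hypothesis G_nonredundant : non_redundant G.
Variables (v0 : vertex G) (es : seq (edge G)) (v : vertex G).
Hypotheses (es_closed : closed_walk v0 es) (es_gt0 : 0 < size es).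
Hypothesis es_primitive : primitive_walk es.

Local Notation n := (size es).
Local Notation x := (overhangs es).
Local Notation l := (size (vlabel v0)).
Local Notation d := (cperiod x).
(* Large enough for the windows used below (three turns past the label of [v0],
   or two turns and the label of [v]) to fit inside [W]. *)
Let K := l + size (vlabel v) + 6.
Let Q := flatten (nseq K es).
Let W := walk_word v0 Q.
Local Notation off := (l * size x - l).

Definition occurrence_pos k := (lpos v0 Q k.+1 + off) %% d.

Let Q_walk : is_walk v0 Q := power_walk es_closed K.

Let x_gt0 : 0 < size x := overhangs_nonempty G_abstract G_no_prefix_suffix es_closed es_gt0.

Let x_period : periodic (cyc x) d /\ d %| size x := cperiodP x_gt0.

Lemma size_W : size W = l + K * size x.
Proof. by rewrite /W /walk_word overhangs_power size_cat size_flatten_nseq. Qed.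

Lemma window_occursE a t : a + size t <= size W ->
  (take (size t) (drop a W) == t) = occurs_at t x (a + off).
Proof.
move=> hW; have lK : l < K by rewrite /K; lia.
have W_at j : j < size t -> onth W (a + j) = cyc x (a + off + j).
  move=> hj; rewrite (walk_word_power_cyc G_abstract G_no_prefix_suffix es_closed es_gt0 lK).
    by rewrite addnAC.
  by apply: leq_trans hW; rewrite ltn_add2l.
apply/eqP/allP => [ht j | ho].
  rewrite mem_iota add0n => /andP [_ hj].
  have E : onth (take (size t) (drop a W)) j = onth t j by rewrite ht.
  by rewrite onth_take hj onth_drop W_at // in E; rewrite E.
apply: eq_from_onth => j; rewrite onth_take onth_drop.
case: ltnP => hj; last by rewrite onth_default.
have := ho j; rewrite mem_iota add0n hj => /(_ isT) /eqP <-.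
by rewrite W_at.
Qed.

Lemma occurrence_pos_occurs k : vtx v0 Q k.+1 = v ->
  occurrence_pos k < d /\ occurs_at (vlabel v) x (occurrence_pos k).
Proof.
move=> hv; split; first by rewrite ltn_mod.
have hrpos := rposE G_abstract Q_walk k.+1; rewrite hv in hrpos.
have hwin : take (size (vlabel v)) (drop (lpos v0 Q k.+1) W) = vlabel v.
  rewrite take_drop (addnC (size _)) -hrpos -hv.
  exact: (vertex_label_window G_abstract Q_walk).
move/eqP: hwin; rewrite window_occursE; last by rewrite -hrpos rpos_le.
by rewrite /occurrence_pos {1}(divn_eq (lpos v0 Q k.+1 + off) d) addnC
  (occurs_at_periodic _ _ _ x_period.1).
Qed.

Lemma occurrence_pos_surj s : s < d -> occurs_at (vlabel v) x s ->
  exists k, [/\ k < n, vtx v0 Q k.+1 = v & occurrence_pos k = s].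
Proof.
move=> sd hs; set r := l + size x + s.
have s_lt : s < size x by apply: leq_trans sd (dvdn_leq x_gt0 x_period.2).
have Kx : (size (vlabel v) + 6) * size x <= K * size x by rewrite leq_mul2r /K; lia.
have vx : size (vlabel v) <= size (vlabel v) * size x by rewrite leq_pmulr.
have rW : r + size (vlabel v) < size W by rewrite size_W /r; lia.
have r_off : r + off = s + l.+1 * size x by rewrite /r mulSn; nia.
have hwin : take (size (vlabel v)) (drop r W) = vlabel v.
  apply/eqP; rewrite window_occursE ?(ltnW rW) // r_off.
  by rewrite (occurs_at_periodic _ _ _ (cyc_periodic x)).
have r_gt0 : 0 < r by rewrite /r; lia.
rewrite -[vlabel v]cats0 -[vlabel v ++ _]/(walk_word v [::]) in rW hwin.
have [c [cQ _ hvc hlc]] := subwalk_of_occurrence G_abstract Q_walk G_nonredundant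
  (isT : is_walk v [::]) r_gt0 rW hwin.
have c_gt0 : 0 < c by case: c hlc {cQ hvc} => // hl0; move: r_gt0; rewrite -hl0 lpos0.
set k := c.-1 %% n; set q := c.-1 %/ n.
have hc : c = k.+1 + q * n by rewrite addSn addnC -divn_eq prednK.
have cKn : k.+1 + q * n <= K * n by rewrite -hc; move: cQ; rewrite /Q size_flatten_nseq addn0.
have [hv' _ hl'] := pos_power_shift G_abstract es_closed cKn.
exists k; split; first by rewrite ltn_mod.
  by rewrite -hv' -hc.
rewrite /occurrence_pos -(modn_cperiodDM _ q x_gt0) addnAC -hl' -hc hlc r_off.
by rewrite modn_cperiodDM // modn_small.
Qed.

Lemma rpos_le_turns i q : q <= K -> i <= q * n -> rpos v0 Q i <= l + q * size x.
Proof.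
move=> qK iq; have qn : 0 + q * n <= K * n by rewrite leq_mul2r qK orbT.
have [_ hr _] := pos_power_shift G_abstract es_closed qn.
have r0 : rpos v0 Q 0 = l by rewrite /rpos take0 /walk_word cats0.
by rewrite -r0 -hr -(subnKC iq) rpos_mono.
Qed.

Lemma windows_of_congruent_pos a b m t :
  vtx v0 Q a = vtx v0 Q b -> lpos v0 Q b = lpos v0 Q a + t * d ->
  0 < lpos v0 Q b -> a + m <= size Q -> b <= size Q ->
  lpos v0 Q b + (rpos v0 Q (a + m) - lpos v0 Q a) < size W ->
  take m (drop a Q) = take m (drop b Q).
Proof.
move=> hv hl b_gt0 amQ bQ hbW.
have hP := subwalk_walk Q_walk a m.
set u := walk_word (vtx v0 Q a) (take m (drop a Q)) in hP *.
have hsz : size u = rpos v0 Q (a + m) - lpos v0 Q a := size_subwalk_word G_abstract Q_walk a m.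
have la : lpos v0 Q a <= rpos v0 Q (a + m).
  by have := rposE G_abstract Q_walk a; have := rpos_mono v0 Q a m; lia.
have occ_a : take (size u) (drop (lpos v0 Q a) W) = u.
  by rewrite take_drop hsz subnK // -subwalk_word.
have occ_b : take (size u) (drop (lpos v0 Q b) W) = u.
  have aW : lpos v0 Q a + size u <= size W by rewrite hsz subnKC // rpos_le.
  apply/eqP; rewrite window_occursE; last by rewrite hsz; apply: ltnW.
  by rewrite hl addnAC (occurs_at_periodic _ _ _ x_period.1) -window_occursE // occ_a.
rewrite -hsz in hbW.
have [c [cQ hPc hvc hlc]] := subwalk_of_occurrence G_abstract Q_walk G_nonredundant
  hP b_gt0 hbW occ_b.
have hcb : c = b.
  apply: (pos_inj G_abstract G_no_prefix_suffix Q_walk) => //; first lia.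
  by rewrite !(rposE G_abstract Q_walk) hvc hlc hv.
have sizeP : size (take m (drop a Q)) = m by rewrite size_takel // size_drop; lia.
by rewrite -[in LHS]hPc hcb sizeP.
Qed.

Lemma occurrence_pos_neq k k' : k < k' < n ->
  vtx v0 Q k.+1 = v -> vtx v0 Q k'.+1 = v -> occurrence_pos k <> occurrence_pos k'.
Proof.
move=> /andP [kk' k'n] hv hv' heq.
have Kn : 6 * n <= K * n by rewrite leq_mul2r /K; lia.
have Kx : (l + 6) * size x <= K * size x by rewrite leq_mul2r /K; lia.
have lx : l <= l * size x by rewrite leq_pmulr.
have lpos_le : lpos v0 Q k.+1 <= lpos v0 Q k'.+1.
  have e : k.+1 + (k' - k) = k'.+1 by lia.
  by have := lpos_mono G_abstract Q_walk k.+1 (k' - k); rewrite e.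
have /dvdnP [t ht] : d %| lpos v0 Q k'.+1 - lpos v0 Q k.+1.
  move: heq; rewrite /occurrence_pos => /eqP; rewrite eq_sym eqn_mod_dvd ?subnDr //.
  by rewrite leq_add2r.
have size_Q : size Q = K * n by rewrite size_flatten_nseq.
have aKn : k.+1 + 1 * n <= K * n by lia.
have bKn : k'.+1 + 1 * n <= K * n by lia.
have [va _ la] := pos_power_shift G_abstract es_closed aKn.
have [vb _ lb] := pos_power_shift G_abstract es_closed bKn.
rewrite -/Q in va la vb lb.
have K3 : 3 <= K by rewrite /K; lia.
have ra : rpos v0 Q (k.+1 + 1 * n + n) <= l + 3 * size x by apply: rpos_le_turns K3 _; lia.
have rb : rpos v0 Q (k'.+1 + 1 * n) <= l + 2 * size x by apply: rpos_le_turns (ltnW K3) _; lia.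
have hw : take n (drop (k.+1 + 1 * n) Q) = take n (drop (k'.+1 + 1 * n) Q).
  apply: (windows_of_congruent_pos (t := t)); rewrite ?va ?vb ?hv ?hv' ?size_Q //; try lia.
  by have := rposE G_abstract Q_walk (k'.+1 + 1 * n); rewrite size_W; lia.
have per : periodic (fun i => onth es (i %% n)) (k' - k).
  apply: (power_window_periodic (K := K) (a := k.+1 + 1 * n) es_gt0); first lia.
  by have -> : k.+1 + 1 * n + (k' - k) = k'.+1 + 1 * n by lia.
have [|w [m [m_gt1 hes]]] := cyclic_period_power _ per; first lia.
exact: es_primitive hes.
Qed.

Lemma occurrence_pos_inj k k' : k < n -> k' < n ->
  vtx v0 Q k.+1 = v -> vtx v0 Q k'.+1 = v -> occurrence_pos k = occurrence_pos k' -> k = k'.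
Proof.
move=> kn k'n hv hv' heq; case: (ltngtP k k') => // [lt_kk' | lt_k'k]; exfalso.
  by apply: (occurrence_pos_neq _ hv hv' heq); rewrite lt_kk'.
by apply: (occurrence_pos_neq _ hv' hv (esym heq)); rewrite lt_k'k.
Qed.

Lemma vertex_occurrences_cyc :
  vertex_occurrences v es = cyc_occurrences (vlabel v) x.
Proof.
rewrite (vertex_occurrencesE v0 es (K := K) v); last by rewrite /K addn_gt0 orbT.
apply: (count_iota_bij (phi := occurrence_pos))
  => [k k' kn k'n /eqP hv /eqP hv' | k _ /eqP hv | s sd hs].
- exact: occurrence_pos_inj.
- exact: occurrence_pos_occurs.
- by have [k [kn hv <-]] := occurrence_pos_surj sd hs; exists k; rewrite hv eqxx.
Qed.

End CircuitOccurrences.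

Theorem theorem1 (Sigma : finType) (G : lgraph Sigma) :
  assembly_graph G -> non_redundant G ->
  forall (v0 : vertex G) (es : seq (edge G)), circuit v0 es ->
  forall v : vertex G,
    vertex_occurrences v es = cyc_occurrences (vlabel v) (circuit_word v0 es).
Proof.
move=> [G_abstract _ _ G_no_prefix_suffix] G_nonredundant v0 es [es_closed es_gt0 es_primitive] v.
have es_walk : is_walk v0 es by case/andP: es_closed.
rewrite (circuit_wordE G_abstract es_walk).
exact: (vertex_occurrences_cyc G_abstract G_no_prefix_suffix G_nonredundant v
  es_closed es_gt0 es_primitive).
Qed.
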